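(* Let ${\cal B}$ be a bialgebra over a field ${\bf k}$, let $({\cal E},\rho)$ be a right ${\cal B}$-comodule algebra, and let $T\subset{\cal E}$ be a left Ore set with localization map $i_T:{\cal E}\to T^{-1}{\cal E}$. Then $T$ is $\rho$-compatible if and only if for every $t\in T$ the element $((i_T\otimes{\rm id})\circ\rho)(t)$ is invertible in the algebra $T^{-1}{\cal E}\otimes{\cal B}$.
   Context: A right ${\cal B}$-comodule algebra is an associative unital ${\bf k}$-algebra ${\cal E}$ with a right ${\cal B}$-coaction $\rho:{\cal E}\to{\cal E}\otimes{\cal B}$ which is a homomorphism of unital algebras. A left Ore set in a ring $R$ is a multiplicative subset $S\subset R\setminus\{0\}$ (containing $1$, closed under products) such that for all $s\in S,r\in R$ there exist $s'\in S,r'\in R$ with $r's=s'r$, and such that $ns=0$ with $n\in R,s\in S$ implies $s'n=0$ for some $s'\in S$; $S^{-1}R$ denotes the ring of left fractions $s^{-1}r$ and $i_S:R\to S^{-1}R$, $r\mapsto 1^{-1}r$, the localization map. A left Ore set $T$ in ${\cal E}$ is called $\rho$-compatible if there exists a unique map $\rho_T:T^{-1}{\cal E}\to T^{-1}{\cal E}\otimes{\cal B}$ making $(T^{-1}{\cal E},\rho_T)$ a right ${\cal B}$-comodule algebra and satisfying $\rho_T\circ i_T=(i_T\otimes{\rm id})\circ\rho$. *)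

(* Tensor products are given by their universal property;
   auxiliary induced maps are obtained with Hilbert's epsilon. *)
From HB Require Import structures.
From mathcomp Require Import all_boot all_order all_algebra.
From Stdlib Require Import ClassicalEpsilon.
Set Implicit Arguments. Unset Strict Implicit. Unset Printing Implicit Defensive.
Import GRing.Theory.
Local Open Scope ring_scope.

Definition klinear {k : fieldType} {U W : lmodType k} (f : U -> W) : Prop :=
  forall (a : k) (u v : U), f (a *: u + v) = a *: f u + f v.

Definition kbilinear {k : fieldType} {U V W : lmodType k} (f : U -> V -> W) : Prop :=
  (forall v, klinear (fun u => f u v)) /\ (forall u, klinear (f u)).

Definition ktrilinear {k : fieldType} {U V X W : lmodType k}
  (f : U -> V -> X -> W) : Prop :=
  (forall v x, klinear (fun u => f u v x)) /\
  (forall u x, klinear (fun v => f u v x)) /\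
  (forall u v, klinear (f u v)).

Definition is_tensor {k : fieldType} {U V W : lmodType k} (t : U -> V -> W) : Prop :=
  kbilinear t /\
  forall (Z : lmodType k) (f : U -> V -> Z), kbilinear f ->
    exists! g : W -> Z, klinear g /\ forall u v, g (t u v) = f u v.

Definition is_tensor3 {k : fieldType} {U V X W : lmodType k}
  (t : U -> V -> X -> W) : Prop :=
  ktrilinear t /\
  forall (Z : lmodType k) (f : U -> V -> X -> Z), ktrilinear f ->
    exists! g : W -> Z, klinear g /\ forall u v x, g (t u v x) = f u v x.

Definition is_algtensor {k : fieldType} {A C W : algType k} (t : A -> C -> W) : Prop :=
  is_tensor t /\
  (forall a c a' c', t a c * t a' c' = t (a * a') (c * c')) /\
  t 1 1 = 1.

(** the linear map W -> Z induced by a bilinear f : U -> V -> Z,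
    i.e. the unique linear g with g (t u v) = f u v (when it exists) *)
Definition tlin {k : fieldType} {U V W Z : lmodType k}
  (t : U -> V -> W) (f : U -> V -> Z) : W -> Z :=
  epsilon (inhabits (fun _ : W => (0 : Z)))
    (fun g => klinear g /\ forall u v, g (t u v) = f u v).

Definition kalg_morph {k : fieldType} {A C : algType k} (f : A -> C) : Prop :=
  klinear f /\ (forall x y, f (x * y) = f x * f y) /\ f 1 = 1.

Definition invertible {k : fieldType} {A : algType k} (x : A) : Prop :=
  exists y, x * y = 1 /\ y * x = 1.

(** coassociativity (d (x) id) o d = (id (x) Delta) o d for d : U -> U (x) V,
    Delta : V -> V (x) V, computed in U (x) V (x) V *)
Definition coassoc {k : fieldType} {U V W VV W3 : lmodType k}
  (t : U -> V -> W) (tV : V -> V -> VV) (t3 : U -> V -> V -> W3)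
  (d : U -> W) (Delta : V -> VV) : Prop :=
  forall u,
    tlin t (fun u0 v => tlin t (fun u' v' => t3 u' v' v) (d u0)) (d u) =
    tlin t (fun u0 v => tlin tV (fun v1 v2 => t3 u0 v1 v2) (Delta v)) (d u).

Definition rcounital {k : fieldType} {U V W : lmodType k}
  (t : U -> V -> W) (d : U -> W) (eps : V -> k) : Prop :=
  forall u, tlin t (fun u0 v => eps v *: u0) (d u) = u.

Definition is_bialgebra {k : fieldType} {B BB : algType k} {BBB : lmodType k}
  (tBB : B -> B -> BB) (tBBB : B -> B -> B -> BBB)
  (Delta : B -> BB) (eps : B -> k) : Prop :=
  kalg_morph Delta /\
  (forall (a : k) x y, eps (a *: x + y) = a * eps x + eps y) /\
  (forall x y, eps (x * y) = eps x * eps y) /\ eps 1 = 1 /\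
  coassoc tBB tBB tBBB Delta Delta /\
  rcounital tBB Delta eps /\
  (forall x, tlin tBB (fun b c => eps b *: c) (Delta x) = x).

Definition is_comodule_algebra {k : fieldType} {E B EB BB : algType k}
  {EBB : lmodType k}
  (tE : E -> B -> EB) (tE3 : E -> B -> B -> EBB) (tBB : B -> B -> BB)
  (Delta : B -> BB) (eps : B -> k) (rho : E -> EB) : Prop :=
  kalg_morph rho /\ coassoc tE tBB tE3 rho Delta /\ rcounital tE rho eps.

Definition left_ore_set {k : fieldType} {E : algType k} (T : pred E) : Prop :=
  T 1 /\ (forall s s', T s -> T s' -> T (s * s')) /\
  (forall s, T s -> s != 0) /\
  (forall s r, T s -> exists s' r', T s' /\ r' * s = s' * r) /\
  (forall n s, T s -> n * s = 0 -> exists s', T s' /\ s' * n = 0).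

Definition is_left_fractions {k : fieldType} {E L : algType k}
  (T : pred E) (i : E -> L) : Prop :=
  kalg_morph i /\
  (forall s, T s -> invertible (i s)) /\
  (forall x, exists s r y, T s /\ y * i s = 1 /\ i s * y = 1 /\ x = y * i r) /\
  (forall r, i r = 0 <-> exists s, T s /\ s * r = 0).

Definition rho_compatible {k : fieldType} {E B EB BB L LB : algType k}
  {LBB : lmodType k}
  (i : E -> L) (tE : E -> B -> EB) (tL : L -> B -> LB)
  (tL3 : L -> B -> B -> LBB) (tBB : B -> B -> BB)
  (Delta : B -> BB) (eps : B -> k) (rho : E -> EB) : Prop :=
  exists! rhoT : L -> LB,
    is_comodule_algebra tL tL3 tBB Delta eps rhoT /\
    forall e, rhoT (i e) = tlin tE (fun e0 b => tL (i e0) b) (rho e).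

(* If rho_T exists, it is an algebra map with rho_T (i_T t) = (i_T (x) id)(rho t), so
   these elements are invertible.  Conversely, their invertibility is exactly what
   the universal property of the Ore localization needs to extend the algebra map
   (i_T (x) id) o rho : E -> T^-1 E (x) B to an algebra map rho_T on T^-1 E, and
   uniquely so.  Coassociativity and counitality of rho_T come from the same
   uniqueness: each side of either identity is a multiplicative map out of T^-1 E
   (into T^-1 E (x) B (x) B with its componentwise product, resp. into T^-1 E), and
   on i_T(E) the two sides reduce to the corresponding identities for rho. *)

From mathcomp Require Import all_boot all_order all_algebra.
From Stdlib Require Import ClassicalEpsilon FunctionalExtensionality.
Set Implicit Arguments. Unset Strict Implicit. Unset Printing Implicit Defensive.
Import GRing.Theory.
Local Open Scope ring_scope.

Section KLinear.
Variable k : fieldType.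
Implicit Types U V W : lmodType k.

Lemma klinD U W (f : U -> W) : klinear f -> forall u v, f (u + v) = f u + f v.
Proof. by move=> hf u v; have := hf 1 u v; rewrite !scale1r. Qed.

Lemma klin0 U W (f : U -> W) : klinear f -> f 0 = 0.
Proof. by move=> hf; apply: (addrI (f 0)); rewrite -klinD // !addr0. Qed.

Lemma klinZ U W (f : U -> W) : klinear f -> forall a u, f (a *: u) = a *: f u.
Proof. by move=> hf a u; rewrite -[a *: u]addr0 hf klin0 // addr0. Qed.

Lemma klinB U W (f : U -> W) : klinear f -> forall u v, f (u - v) = f u - f v.
Proof. by move=> hf u v; rewrite klinD // -scaleN1r klinZ // scaleN1r. Qed.

Lemma klin_comp U V W (f : V -> W) (g : U -> V) :
  klinear f -> klinear g -> klinear (fun x => f (g x)).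
Proof. by move=> hf hg a u v; rewrite hg hf. Qed.

Lemma klin_comb U W (f g : U -> W) (a : k) :
  klinear f -> klinear g -> klinear (fun x => a *: f x + g x).
Proof.
move=> hf hg b x y; rewrite hf hg !scalerDr !scalerA mulrC.
by rewrite -!addrA; congr (_ + _); rewrite addrCA.
Qed.

Lemma klin_scale U (a : k) : klinear (fun u : U => a *: u).
Proof. by move=> b u v; rewrite scalerDr !scalerA mulrC. Qed.

Lemma klin_mulr (A : algType k) (y : A) : klinear (fun x => x * y).
Proof. by move=> a u v; rewrite mulrDl scalerAl. Qed.

Lemma klin_mull (A : algType k) (x : A) : klinear (fun y => x * y).
Proof. by move=> a u v; rewrite mulrDr scalerAr. Qed.

Lemma kalg_morph_invertible (A C : algType k) (f : A -> C) (x : A) :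
  kalg_morph f -> invertible x -> invertible (f x).
Proof.
by move=> [_ [fM f1]] [y [xy yx]]; exists (f y); rewrite -!fM xy yx f1.
Qed.

Lemma invertible_lreg (A : algType k) (x : A) : invertible x -> GRing.lreg x.
Proof.
move=> [y [_ yx]] z z' e.
by rewrite -[z]mul1r -[z']mul1r -yx -!mulrA e.
Qed.

End KLinear.

Section Tensor.
Variables (k : fieldType) (U V W : lmodType k) (t : U -> V -> W).
Hypothesis ht : is_tensor t.

Lemma tlin_spec (Z : lmodType k) (f : U -> V -> Z) : kbilinear f ->
  klinear (tlin t f) /\ forall u v, tlin t f (t u v) = f u v.
Proof.
move=> hf; have [g [hg _]] := ht.2 Z f hf.
by unfold tlin; apply epsilon_spec; exists g.
Qed.

Lemma tlinE (Z : lmodType k) (f : U -> V -> Z) : kbilinear f ->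
  forall u v, tlin t f (t u v) = f u v.
Proof. by case/tlin_spec. Qed.

Lemma tlin_klin (Z : lmodType k) (f : U -> V -> Z) : kbilinear f -> klinear (tlin t f).
Proof. by case/tlin_spec. Qed.

Lemma tensor_ext (Z : lmodType k) (g h : W -> Z) : klinear g -> klinear h ->
  (forall u v, g (t u v) = h (t u v)) -> g =1 h.
Proof.
move=> hg hh e w.
have hb : kbilinear (fun u v => g (t u v)).
  by split=> [v|u] a x y; [rewrite (ht.1.1 v) | rewrite (ht.1.2 u)]; rewrite hg.
have [g0 [_ uniq_g]] := ht.2 Z _ hb.
by rewrite -(uniq_g g (conj hg (fun u v => erefl)))
  (uniq_g h (conj hh (fun u v => esym (e u v)))).
Qed.

Lemma tlin_klin_param (Z P : lmodType k) (f : P -> U -> V -> Z) :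
  (forall p, kbilinear (f p)) -> (forall u v, klinear (fun p => f p u v)) ->
  forall w, klinear (fun p => tlin t (f p) w).
Proof.
move=> hb hp w a p q.
apply: (tensor_ext (g := tlin t (f (a *: p + q)))
                   (h := fun w => a *: tlin t (f p) w + tlin t (f q) w)).
- exact: tlin_klin.
- by apply: klin_comb; apply: tlin_klin.
- by move=> u v; rewrite !tlinE // hp.
Qed.

End Tensor.

Lemma tensor_ext2 (k : fieldType) (U V W U' V' W' Z : lmodType k)
  (t : U -> V -> W) (t' : U' -> V' -> W') (F G : W -> W' -> Z) :
  is_tensor t -> is_tensor t' ->
  (forall w', klinear (F^~ w')) -> (forall w, klinear (F w)) ->
  (forall w', klinear (G^~ w')) -> (forall w, klinear (G w)) ->
  (forall u v u' v', F (t u v) (t' u' v') = G (t u v) (t' u' v')) ->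
  forall w w', F w w' = G w w'.
Proof.
move=> ht ht' F1 F2 G1 G2 e w w'.
apply: (tensor_ext ht (g := F^~ w') (h := G^~ w')) => // u v.
exact: (tensor_ext ht').
Qed.

Section AlgTensor.
Variables (k : fieldType) (A C W : algType k) (t : A -> C -> W).
Hypothesis ht : is_algtensor t.

Lemma tlinM (Z : lmodType k) (m : Z -> Z -> Z) (f g h : A -> C -> Z) :
  (forall z', klinear (m^~ z')) -> (forall z, klinear (m z)) ->
  kbilinear f -> kbilinear g -> kbilinear h ->
  (forall a c a' c', f (a * a') (c * c') = m (g a c) (h a' c')) ->
  forall X Y, tlin t f (X * Y) = m (tlin t g X) (tlin t h Y).
Proof.
move=> ml mr hf hg hh e.
apply: (tensor_ext2 (F := fun X Y => tlin t f (X * Y)) ht.1 ht.1).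
- by move=> Y; apply: klin_comp (tlin_klin ht.1 hf) (klin_mulr Y).
- by move=> X; apply: klin_comp (tlin_klin ht.1 hf) (klin_mull X).
- by move=> Y; apply: klin_comp (ml _) (tlin_klin ht.1 hg).
- by move=> X; apply: klin_comp (mr _) (tlin_klin ht.1 hh).
- by move=> a c a' c'; rewrite ht.2.1 !(tlinE ht.1).
Qed.

Lemma tlin1 (Z : lmodType k) (f : A -> C -> Z) : kbilinear f -> tlin t f 1 = f 1 1.
Proof. by move=> hf; rewrite -ht.2.2 (tlinE ht.1). Qed.

End AlgTensor.

Section Tensor3.
Variables (k : fieldType) (U V X W : lmodType k) (t : U -> V -> X -> W).
Hypothesis ht : is_tensor3 t.

Definition tlin3 (Z : lmodType k) (f : U -> V -> X -> Z) : W -> Z :=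
  epsilon (inhabits (fun _ : W => (0 : Z)))
    (fun g => klinear g /\ forall u v x, g (t u v x) = f u v x).

Lemma tlin3_spec (Z : lmodType k) (f : U -> V -> X -> Z) : ktrilinear f ->
  klinear (tlin3 f) /\ forall u v x, tlin3 f (t u v x) = f u v x.
Proof.
move=> hf; have [g [hg _]] := ht.2 Z f hf.
by unfold tlin3; apply epsilon_spec; exists g.
Qed.

Lemma tlin3E (Z : lmodType k) (f : U -> V -> X -> Z) : ktrilinear f ->
  forall u v x, tlin3 f (t u v x) = f u v x.
Proof. by case/tlin3_spec. Qed.

Lemma tlin3_klin (Z : lmodType k) (f : U -> V -> X -> Z) : ktrilinear f ->
  klinear (tlin3 f).
Proof. by case/tlin3_spec. Qed.

Lemma tensor3_ext (Z : lmodType k) (g h : W -> Z) : klinear g -> klinear h ->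
  (forall u v x, g (t u v x) = h (t u v x)) -> g =1 h.
Proof.
move=> hg hh e w.
have hb : ktrilinear (fun u v x => g (t u v x)).
  split; [|split] => [v x'|u x'|u v] a x1 y.
  - by rewrite (ht.1.1 v x') hg.
  - by rewrite (ht.1.2.1 u x') hg.
  - by rewrite (ht.1.2.2 u v) hg.
have [g0 [_ uniq_g]] := ht.2 Z _ hb.
by rewrite -(uniq_g g (conj hg (fun u v x => erefl)))
  (uniq_g h (conj hh (fun u v x => esym (e u v x)))).
Qed.

Lemma tlin3_klin_param (Z P : lmodType k) (f : P -> U -> V -> X -> Z) :
  (forall p, ktrilinear (f p)) -> (forall u v x, klinear (fun p => f p u v x)) ->
  forall w, klinear (fun p => tlin3 (f p) w).
Proof.
move=> hb hp w a p q.
apply: (tensor3_ext (g := tlin3 (f (a *: p + q)))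
                    (h := fun w => a *: tlin3 (f p) w + tlin3 (f q) w)).
- exact: tlin3_klin.
- by apply: klin_comb; apply: tlin3_klin.
- by move=> u v x; rewrite !tlin3E // hp.
Qed.

End Tensor3.

Section TripleProduct.
Variables (k : fieldType) (A1 A2 A3 : algType k) (W : lmodType k)
  (t : A1 -> A2 -> A3 -> W).
Hypothesis ht : is_tensor3 t.

Let tlinear1 a2 a3 : klinear (fun a1 => t a1 a2 a3) := ht.1.1 a2 a3.
Let tlinear2 a1 a3 : klinear (fun a2 => t a1 a2 a3) := ht.1.2.1 a1 a3.
Let tlinear3 a1 a2 : klinear (t a1 a2) := ht.1.2.2 a1 a2.

Definition mul3r (a1 : A1) (a2 : A2) (a3 : A3) : W -> W :=
  tlin3 t (fun u v w => t (u * a1) (v * a2) (w * a3)).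

Lemma mul3r_trilinear a1 a2 a3 :
  ktrilinear (fun u v w => t (u * a1) (v * a2) (w * a3)).
Proof.
split; [|split] => [v w|u w|u v].
- exact: klin_comp (tlinear1 _ _) (klin_mulr a1).
- exact: klin_comp (tlinear2 _ _) (klin_mulr a2).
- exact: klin_comp (tlinear3 _ _) (klin_mulr a3).
Qed.

Lemma mul3r_klin a1 a2 a3 : klinear (mul3r a1 a2 a3).
Proof. exact: (tlin3_klin ht (mul3r_trilinear a1 a2 a3)). Qed.

Lemma mul3r_trilinear_param X : ktrilinear (fun a1 a2 a3 => mul3r a1 a2 a3 X).
Proof.
split; [|split] => [a2 a3|a1 a3|a1 a2].
- apply: (tlin3_klin_param ht (f := fun a1 u v w => t (u * a1) (v * a2) (w * a3)))
    => [a1|u v w]; first exact: mul3r_trilinear.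
  exact: klin_comp (tlinear1 _ _) (klin_mull u).
- apply: (tlin3_klin_param ht (f := fun a2 u v w => t (u * a1) (v * a2) (w * a3)))
    => [a2|u v w]; first exact: mul3r_trilinear.
  exact: klin_comp (tlinear2 _ _) (klin_mull v).
- apply: (tlin3_klin_param ht (f := fun a3 u v w => t (u * a1) (v * a2) (w * a3)))
    => [a3|u v w]; first exact: mul3r_trilinear.
  exact: klin_comp (tlinear3 _ _) (klin_mull w).
Qed.

Definition mul3 (X Y : W) : W := tlin3 t (fun a1 a2 a3 => mul3r a1 a2 a3 X) Y.

Lemma mul3E a1 a2 a3 b1 b2 b3 :
  mul3 (t a1 a2 a3) (t b1 b2 b3) = t (a1 * b1) (a2 * b2) (a3 * b3).
Proof.
by rewrite /mul3 (tlin3E ht (mul3r_trilinear_param _)) /mul3r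
  (tlin3E ht (mul3r_trilinear _ _ _)).
Qed.

Lemma mul3_klinr X : klinear (mul3 X).
Proof. exact: (tlin3_klin ht (mul3r_trilinear_param X)). Qed.

Lemma mul3_klinl Y : klinear (mul3^~ Y).
Proof.
apply: (tlin3_klin_param ht (f := fun X a1 a2 a3 => mul3r a1 a2 a3 X))
  => [X|a1 a2 a3]; first exact: mul3r_trilinear_param.
exact: mul3r_klin.
Qed.

Lemma mul3A : associative mul3.
Proof.
have simple_l a1 a2 a3 Y Z :
    mul3 (t a1 a2 a3) (mul3 Y Z) = mul3 (mul3 (t a1 a2 a3) Y) Z.
  apply: (tensor3_ext ht (g := fun Y => mul3 (t a1 a2 a3) (mul3 Y Z))
                         (h := fun Y => mul3 (mul3 (t a1 a2 a3) Y) Z)) => [||b1 b2 b3].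
  - exact: klin_comp (mul3_klinr _) (mul3_klinl Z).
  - exact: klin_comp (mul3_klinl Z) (mul3_klinr _).
  rewrite mul3E; apply: (tensor3_ext ht (g := fun Z => mul3 _ (mul3 _ Z))) => [||c1 c2 c3].
  - exact: klin_comp (mul3_klinr _) (mul3_klinr _).
  - exact: mul3_klinr.
  by rewrite !mul3E !mulrA.
move=> X Y Z; apply: (tensor3_ext ht (g := fun X => mul3 X (mul3 Y Z))
                                     (h := fun X => mul3 (mul3 X Y) Z)) => //.
- exact: mul3_klinl.
- exact: klin_comp (mul3_klinl Z) (mul3_klinl Y).
Qed.

Lemma mul1_3 : left_id (t 1 1 1) mul3.
Proof.
apply: (tensor3_ext ht (g := mul3 (t 1 1 1)) (h := id)) => //; first exact: mul3_klinr.
by move=> a1 a2 a3; rewrite mul3E !mul1r.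
Qed.

Lemma mul3_1 : right_id (t 1 1 1) mul3.
Proof.
apply: (tensor3_ext ht (g := mul3^~ (t 1 1 1)) (h := id)) => //; first exact: mul3_klinl.
by move=> a1 a2 a3; rewrite mul3E !mulr1.
Qed.

End TripleProduct.

Section LeftFractions.
Variables (k : fieldType) (E L : algType k) (T : pred E) (iT : E -> L).
Hypothesis Hi : is_left_fractions T iT.

Let iTM a b : iT (a * b) = iT a * iT b := Hi.1.2.1 a b.

Lemma left_fractions_ext (X : Type) (m : X -> X -> X) (e : X) :
  associative m -> left_id e m -> right_id e m ->
  forall g h : L -> X, {morph g : a b / a * b >-> m a b} ->
  {morph h : a b / a * b >-> m a b} -> g 1 = e -> h 1 = e ->
  (forall r, g (iT r) = h (iT r)) -> g =1 h.
Proof.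
move=> mA m1x mx1 g h gM hM g1 h1 gi x.
have [s [r [y [Ts [ys [sy ->]]]]]] := Hi.2.2.1 x.
rewrite gM hM gi; congr m.
(* [g y] and [h y] are both inverses of [g (iT s) = h (iT s)] in the monoid. *)
have hsy : m (h (iT s)) (h y) = e by rewrite -hM sy h1.
by rewrite -[g y]mx1 -hsy -gi mA -gM ys g1 m1x.
Qed.

Lemma left_fractions_rep x : exists s r, T s /\ iT s * x = iT r.
Proof.
have [s [r [y [Ts [ys [sy ->]]]]]] := Hi.2.2.1 x.
by exists s, r; rewrite mulrA sy mul1r.
Qed.

Variables (R : algType k) (phi : E -> R).
Hypotheses (HT : left_ore_set T) (Hphi : kalg_morph phi)
  (Hinv : forall s, T s -> invertible (phi s)).

Let phiM a b : phi (a * b) = phi a * phi b := Hphi.2.1 a b.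

Lemma phi_lreg s : T s -> GRing.lreg (phi s).
Proof. by move=> Ts; apply: invertible_lreg; apply: Hinv. Qed.

Lemma phi_eq_of_iT_eq a b : iT a = iT b -> phi a = phi b.
Proof.
move=> eab; have : iT (a - b) = 0 by rewrite (klinB Hi.1.1) eab subrr.
case/(Hi.2.2.2 (a - b)) => [s [Ts sab]].
apply/eqP; rewrite -subr_eq0 -(klinB Hphi.1); apply/eqP/(phi_lreg Ts).
by rewrite -phiM sab (klin0 Hphi.1) mulr0.
Qed.

Lemma phi_fraction_indep x s r s' r' z :
  T s -> iT s * x = iT r -> T s' -> iT s' * x = iT r' ->
  phi s * z = phi r -> phi s' * z = phi r'.
Proof.
move=> Ts sx Ts' s'x sz.
have [s1 [r1 [Ts1 e1]]] := HT.2.2.2.1 s s' Ts.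
have e2 : phi (s1 * r') = phi (r1 * r).
  by apply: phi_eq_of_iT_eq; rewrite !iTM -sx -s'x !mulrA -!iTM e1.
apply: (phi_lreg Ts1).
by rewrite mulrA -phiM -e1 phiM -mulrA sz -!phiM e2.
Qed.

(* The extension sends the fraction [s^-1 r] to [(phi s)^-1 phi r]; it is
   characterised without choosing a representative. *)
Definition ore_ext (x : L) : R :=
  epsilon (inhabits 0)
    (fun z => forall s r, T s -> iT s * x = iT r -> phi s * z = phi r).

Lemma ore_extP x s r : T s -> iT s * x = iT r -> phi s * ore_ext x = phi r.
Proof.
have [s0 [r0 [Ts0 e0]]] := left_fractions_rep x.
have [y0 [s0y0 _]] := Hinv Ts0.
have ex_z : exists z, forall s r, T s -> iT s * x = iT r -> phi s * z = phi r.
  exists (y0 * phi r0) => s2 r2 Ts2 e2.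
  by apply: (phi_fraction_indep Ts0 e0 Ts2 e2); rewrite mulrA s0y0 mul1r.
by move: s r; unfold ore_ext; apply epsilon_spec; exact: ex_z.
Qed.

Lemma ore_ext_eq x s r z : T s -> iT s * x = iT r -> phi s * z = phi r -> ore_ext x = z.
Proof. by move=> Ts e ez; apply: (phi_lreg Ts); rewrite ez (ore_extP Ts e). Qed.

Lemma ore_extE e : ore_ext (iT e) = phi e.
Proof.
by apply: (ore_ext_eq (s := 1)); rewrite ?Hi.1.2.2 ?Hphi.2.2 ?mul1r ?HT.1.
Qed.

Lemma ore_extM x x' : ore_ext (x * x') = ore_ext x * ore_ext x'.
Proof.
have [s [r [Ts e]]] := left_fractions_rep x.
have [s' [r' [Ts' e']]] := left_fractions_rep x'.
have [s1 [r1 [Ts1 e1]]] := HT.2.2.2.1 s' r Ts'.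
apply: (ore_ext_eq (s := s1 * s) (r := r1 * r')).
- exact: HT.2.1.
- by rewrite iTM -!mulrA [iT s * _]mulrA e mulrA -iTM -e1 iTM -mulrA e' -iTM.
- by rewrite phiM -!mulrA [phi s * _]mulrA (ore_extP Ts e) mulrA -phiM -e1 phiM
    -mulrA (ore_extP Ts' e') phiM.
Qed.

Lemma ore_ext_klin : klinear ore_ext.
Proof.
move=> a x x'.
have [s [r [Ts e]]] := left_fractions_rep x.
have [s' [r' [Ts' e']]] := left_fractions_rep x'.
have [s1 [r1 [Ts1 e1]]] := HT.2.2.2.1 s s' Ts.
apply: (ore_ext_eq (s := s1 * s') (r := a *: (r1 * r) + s1 * r')).
- exact: HT.2.1.
- have h1 : iT s1 * iT s' = iT r1 * iT s by rewrite -!iTM e1.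
  by rewrite (klinD Hi.1.1) (klinZ Hi.1.1) !iTM mulrDr {1}h1 -!mulrA -!scalerAr e e'.
- have h1 : phi s1 * phi s' = phi r1 * phi s by rewrite -!phiM e1.
  by rewrite (klinD Hphi.1) (klinZ Hphi.1) !phiM mulrDr {1}h1 -!mulrA -!scalerAr
    (ore_extP Ts e) (ore_extP Ts' e').
Qed.

Lemma ore_ext_morph : kalg_morph ore_ext.
Proof.
split; [exact: ore_ext_klin | split; first exact: ore_extM].
by rewrite -Hi.1.2.2 ore_extE Hphi.2.2.
Qed.

End LeftFractions.

Section BialgebraTensors.
Variables (k : fieldType) (B BB : algType k) (tBB : B -> B -> BB)
  (Delta : B -> BB) (eps : B -> k).
Hypotheses (hBB : is_algtensor tBB) (hDelta : kalg_morph Delta)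
  (heps : forall (a : k) x y, eps (a *: x + y) = a * eps x + eps y)
  (hepsM : forall x y, eps (x * y) = eps x * eps y) (heps1 : eps 1 = 1).

Section CoactionMaps.
Variables (A AB : algType k) (ABB : lmodType k)
  (tA : A -> B -> AB) (tA3 : A -> B -> B -> ABB).
Hypotheses (hA : is_algtensor tA) (hA3 : is_tensor3 tA3).

Let tA3_klin1 b c : klinear (fun a => tA3 a b c) := hA3.1.1 b c.
Let tA3_klin2 a c : klinear (fun b => tA3 a b c) := hA3.1.2.1 a c.
Let tA3_klin3 a b : klinear (tA3 a b) := hA3.1.2.2 a b.
Let mul3_klinl' := mul3_klinl hA3.
Let mul3_klinr' := mul3_klinr hA3.

(* [tensr b] is [X |-> X (x) b] and [ltens a] is [P |-> a (x) P]; [coact_tens d],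
   [tens_comul] and [tens_counit] are [d (x) id], [id (x) Delta] and [id (x) eps],
   written exactly as in [coassoc] and [rcounital]. *)
Definition tensr (b : B) : AB -> ABB := tlin tA (fun a c => tA3 a c b).
Definition ltens (a : A) : BB -> ABB := tlin tBB (fun b c => tA3 a b c).
Definition coact_tens (d : A -> AB) : AB -> ABB := tlin tA (fun a b => tensr b (d a)).
Definition tens_comul : AB -> ABB := tlin tA (fun a b => ltens a (Delta b)).
Definition tens_counit : AB -> A := tlin tA (fun a b => eps b *: a).

Lemma tensr_bilinear b : kbilinear (fun a c => tA3 a c b).
Proof. by split=> [c|a]; [apply: tA3_klin1 | apply: tA3_klin2]. Qed.

Lemma tensrE b a c : tensr b (tA a c) = tA3 a c b.
Proof. exact: (tlinE hA.1 (tensr_bilinear b)). Qed.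

Lemma tensr_klin b : klinear (tensr b).
Proof. exact: (tlin_klin hA.1 (tensr_bilinear b)). Qed.

Lemma tensr_klin_param X : klinear (tensr^~ X).
Proof.
apply: (tlin_klin_param hA.1 (f := fun b a c => tA3 a c b)) => [b|a c].
  exact: tensr_bilinear.
exact: tA3_klin3.
Qed.

Lemma tensrM b b' X Y : tensr (b * b') (X * Y) = mul3 tA3 (tensr b X) (tensr b' Y).
Proof.
apply: (tlinM hA mul3_klinl' mul3_klinr'); try exact: tensr_bilinear.
by move=> a c a' c'; rewrite mul3E.
Qed.

Lemma ltens_bilinear a : kbilinear (fun b c => tA3 a b c).
Proof. by split=> [c|b]; [apply: tA3_klin2 | apply: tA3_klin3]. Qed.

Lemma ltensE a b c : ltens a (tBB b c) = tA3 a b c.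
Proof. exact: (tlinE hBB.1 (ltens_bilinear a)). Qed.

Lemma ltens_klin a : klinear (ltens a).
Proof. exact: (tlin_klin hBB.1 (ltens_bilinear a)). Qed.

Lemma ltens_klin_param P : klinear (ltens^~ P).
Proof.
apply: (tlin_klin_param hBB.1 (f := fun a b c => tA3 a b c)) => [a|b c].
  exact: ltens_bilinear.
exact: tA3_klin1.
Qed.

Lemma ltensM a a' P P' : ltens (a * a') (P * P') = mul3 tA3 (ltens a P) (ltens a' P').
Proof.
apply: (tlinM hBB mul3_klinl' mul3_klinr'); try exact: ltens_bilinear.
by move=> b c b' c'; rewrite mul3E.
Qed.

Lemma coact_tens_bilinear (d : A -> AB) : klinear d -> kbilinear (fun a b => tensr b (d a)).
Proof.
by move=> hd; split=> [b|a]; [apply: klin_comp (tensr_klin b) hd | apply: tensr_klin_param].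
Qed.

Lemma coact_tensE (d : A -> AB) : klinear d -> forall a b, coact_tens d (tA a b) = tensr b (d a).
Proof. by move=> hd; apply: (tlinE hA.1 (coact_tens_bilinear hd)). Qed.

Lemma coact_tens_klin (d : A -> AB) : klinear d -> klinear (coact_tens d).
Proof. by move=> hd; apply: (tlin_klin hA.1 (coact_tens_bilinear hd)). Qed.

Lemma coact_tensM (d : A -> AB) : kalg_morph d ->
  forall X Y, coact_tens d (X * Y) = mul3 tA3 (coact_tens d X) (coact_tens d Y).
Proof.
move=> [hd [dM _]]; apply: (tlinM hA mul3_klinl' mul3_klinr'); try exact: coact_tens_bilinear.
by move=> a b a' b'; rewrite dM tensrM.
Qed.

Lemma coact_tens1 (d : A -> AB) : kalg_morph d -> coact_tens d 1 = tA3 1 1 1.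
Proof.
move=> [hd [_ d1]].
by rewrite /coact_tens (tlin1 hA (coact_tens_bilinear hd)) d1 -hA.2.2 tensrE.
Qed.

Lemma tens_comul_bilinear : kbilinear (fun a b => ltens a (Delta b)).
Proof.
by split=> [b|a]; [apply: ltens_klin_param | apply: klin_comp (ltens_klin a) hDelta.1].
Qed.

Lemma tens_comulE a b : tens_comul (tA a b) = ltens a (Delta b).
Proof. exact: (tlinE hA.1 tens_comul_bilinear). Qed.

Lemma tens_comul_klin : klinear tens_comul.
Proof. exact: (tlin_klin hA.1 tens_comul_bilinear). Qed.

Lemma tens_comulM X Y : tens_comul (X * Y) = mul3 tA3 (tens_comul X) (tens_comul Y).
Proof.
apply: (tlinM hA mul3_klinl' mul3_klinr'); try exact: tens_comul_bilinear.
by move=> a b a' b'; rewrite hDelta.2.1 ltensM.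
Qed.

Lemma tens_comul1 : tens_comul 1 = tA3 1 1 1.
Proof. by rewrite /tens_comul (tlin1 hA tens_comul_bilinear) hDelta.2.2 -hBB.2.2 ltensE. Qed.

Lemma tens_counit_bilinear : kbilinear (fun (a : A) b => eps b *: a).
Proof.
split=> [b|a]; first exact: klin_scale.
by move=> c b b'; rewrite heps scalerDl scalerA.
Qed.

Lemma tens_counitE a b : tens_counit (tA a b) = eps b *: a.
Proof. exact: (tlinE hA.1 tens_counit_bilinear). Qed.

Lemma tens_counit_klin : klinear tens_counit.
Proof. exact: (tlin_klin hA.1 tens_counit_bilinear). Qed.

Lemma tens_counitM X Y : tens_counit (X * Y) = tens_counit X * tens_counit Y.
Proof.
apply: (tlinM hA (@klin_mulr _ A) (@klin_mull _ A)); try exact: tens_counit_bilinear.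
by move=> a b a' b'; rewrite hepsM -scalerAl -scalerAr scalerA.
Qed.

Lemma tens_counit1 : tens_counit 1 = 1.
Proof. by rewrite /tens_counit (tlin1 hA tens_counit_bilinear) heps1 scale1r. Qed.

End CoactionMaps.

Section Transport.
Variables (A AB A' A'B : algType k) (ABB A'BB : lmodType k)
  (tA : A -> B -> AB) (tA3 : A -> B -> B -> ABB)
  (tA' : A' -> B -> A'B) (tA'3 : A' -> B -> B -> A'BB) (f : A -> A').
Hypotheses (hA : is_algtensor tA) (hA3 : is_tensor3 tA3)
  (hA' : is_algtensor tA') (hA'3 : is_tensor3 tA'3) (hf : kalg_morph f).

Definition map_tens : AB -> A'B := tlin tA (fun a b => tA' (f a) b).
Definition map_tens3 : ABB -> A'BB := tlin3 tA3 (fun a b c => tA'3 (f a) b c).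

Lemma map_tens_bilinear : kbilinear (fun a b => tA' (f a) b).
Proof. by split=> [b|a]; [apply: klin_comp (hA'.1.1.1 b) hf.1 | apply: hA'.1.1.2]. Qed.

Lemma map_tensE a b : map_tens (tA a b) = tA' (f a) b.
Proof. exact: (tlinE hA.1 map_tens_bilinear). Qed.

Lemma map_tens_klin : klinear map_tens.
Proof. exact: (tlin_klin hA.1 map_tens_bilinear). Qed.

Lemma map_tens_morph : kalg_morph map_tens.
Proof.
split; [exact: map_tens_klin | split].
- apply: (tlinM hA (@klin_mulr _ A'B) (@klin_mull _ A'B)); try exact: map_tens_bilinear.
  by move=> a b a' b'; rewrite hA'.2.1 hf.2.1.
- by rewrite /map_tens (tlin1 hA map_tens_bilinear) hf.2.2 hA'.2.2.
Qed.

Lemma map_tens3_trilinear : ktrilinear (fun a b c => tA'3 (f a) b c).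
Proof.
split; [|split] => [b c|a c|a b]; last exact: hA'3.1.2.2.
  exact: klin_comp (hA'3.1.1 b c) hf.1.
exact: hA'3.1.2.1.
Qed.

Lemma map_tens3E a b c : map_tens3 (tA3 a b c) = tA'3 (f a) b c.
Proof. exact: (tlin3E hA3 map_tens3_trilinear). Qed.

Lemma map_tens3_klin : klinear map_tens3.
Proof. exact: (tlin3_klin hA3 map_tens3_trilinear). Qed.

Lemma tensr_map_tens b X : tensr tA' tA'3 b (map_tens X) = map_tens3 (tensr tA tA3 b X).
Proof.
apply: (tensor_ext hA.1 (g := fun X => tensr tA' tA'3 b (map_tens X))
                          (h := fun X => map_tens3 (tensr tA tA3 b X))) => [||a c].
- exact: klin_comp (tensr_klin hA' hA'3 b) map_tens_klin.
- exact: klin_comp map_tens3_klin (tensr_klin hA hA3 b).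
by rewrite map_tensE !tensrE // map_tens3E.
Qed.

Lemma ltens_map a P : ltens tA'3 (f a) P = map_tens3 (ltens tA3 a P).
Proof.
apply: (tensor_ext hBB.1 (g := ltens tA'3 (f a))
                          (h := fun P => map_tens3 (ltens tA3 a P))) => [||b c].
- exact: ltens_klin.
- exact: klin_comp map_tens3_klin (ltens_klin hA3 a).
by rewrite (ltensE hA'3) (ltensE hA3) map_tens3E.
Qed.

Lemma coact_tens_map (d : A -> AB) (d' : A' -> A'B) :
  klinear d -> klinear d' -> (forall a, d' (f a) = map_tens (d a)) ->
  forall X, coact_tens tA' tA'3 d' (map_tens X) = map_tens3 (coact_tens tA tA3 d X).
Proof.
move=> hd hd' dd'.
apply: (tensor_ext hA.1 (g := fun X => coact_tens tA' tA'3 d' (map_tens X))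
                          (h := fun X => map_tens3 (coact_tens tA tA3 d X))) => [||a b].
- exact: klin_comp (coact_tens_klin hA' hA'3 hd') map_tens_klin.
- exact: klin_comp map_tens3_klin (coact_tens_klin hA hA3 hd).
by rewrite map_tensE !coact_tensE // dd' tensr_map_tens.
Qed.

Lemma tens_comul_map X :
  tens_comul tA' tA'3 (map_tens X) = map_tens3 (tens_comul tA tA3 X).
Proof.
apply: (tensor_ext hA.1 (g := fun X => tens_comul tA' tA'3 (map_tens X))
                          (h := fun X => map_tens3 (tens_comul tA tA3 X))) => [||a b].
- exact: klin_comp (tens_comul_klin hA' hA'3) map_tens_klin.
- exact: klin_comp map_tens3_klin (tens_comul_klin hA hA3).
by rewrite map_tensE !tens_comulE // ltens_map.
Qed.

Lemma tens_counit_map X : tens_counit tA' (map_tens X) = f (tens_counit tA X).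
Proof.
apply: (tensor_ext hA.1 (g := fun X => tens_counit tA' (map_tens X))
                          (h := fun X => f (tens_counit tA X))) => [||a b].
- exact: klin_comp (tens_counit_klin hA') map_tens_klin.
- exact: klin_comp hf.1 (tens_counit_klin hA).
by rewrite map_tensE !tens_counitE // (klinZ hf.1).
Qed.

End Transport.

Section Localization.
Variables (E EB : algType k) (EBB : lmodType k)
  (tE : E -> B -> EB) (tE3 : E -> B -> B -> EBB) (rho : E -> EB) (T : pred E)
  (L LB : algType k) (LBB : lmodType k)
  (tL : L -> B -> LB) (tL3 : L -> B -> B -> LBB) (iT : E -> L).
Hypotheses (hE : is_algtensor tE) (hE3 : is_tensor3 tE3)
  (hrho : is_comodule_algebra tE tE3 tBB Delta eps rho)
  (HT : left_ore_set T) (Hi : is_left_fractions T iT)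
  (hL : is_algtensor tL) (hL3 : is_tensor3 tL3).

Definition rho_loc (e : E) : LB := map_tens tE tL iT (rho e).

Lemma rho_loc_morph : kalg_morph rho_loc.
Proof.
have [hi [hrhoM hrho1]] := hrho.1; have [hm [hmM hm1]] := map_tens_morph hE hL Hi.1.
by split; [apply: klin_comp hm hi | split=> [x y|]; rewrite /rho_loc ?hrhoM ?hrho1].
Qed.

Lemma rho_compatible_invertible :
  rho_compatible iT tE tL tL3 tBB Delta eps rho -> forall t, T t -> invertible (rho_loc t).
Proof.
move=> [rhoT [[[rhoT_morph _] rhoT_iT] _]] t Tt.
have -> : rho_loc t = rhoT (iT t) by rewrite rhoT_iT.
exact: kalg_morph_invertible rhoT_morph (Hi.2.1 t Tt).
Qed.

Section Extension.
Hypothesis Hinv : forall t, T t -> invertible (rho_loc t).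

Let rhoT := ore_ext T iT rho_loc.
Let rhoT_morph : kalg_morph rhoT := ore_ext_morph Hi HT rho_loc_morph Hinv.
Let rhoT_iT e : rhoT (iT e) = rho_loc e := ore_extE Hi HT rho_loc_morph Hinv e.

Lemma ore_ext_coassoc : coassoc tL tBB tL3 rhoT Delta.
Proof.
move=> x; apply: (left_fractions_ext Hi (mul3A hL3) (mul1_3 hL3) (mul3_1 hL3)
  (g := fun x => coact_tens tL tL3 rhoT (rhoT x)) (h := fun x => tens_comul tL tL3 (rhoT x))).
- by move=> a b; rewrite rhoT_morph.2.1 (coact_tensM hL hL3 rhoT_morph).
- by move=> a b; rewrite rhoT_morph.2.1 (tens_comulM hL hL3).
- by rewrite rhoT_morph.2.2 (coact_tens1 hL hL3 rhoT_morph).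
- by rewrite rhoT_morph.2.2 (tens_comul1 hL hL3).
move=> r; rewrite rhoT_iT /rho_loc (tens_comul_map hE hE3 hL hL3 Hi.1).
rewrite (coact_tens_map hE hE3 hL hL3 Hi.1 hrho.1.1 rhoT_morph.1) //.
by congr map_tens3; apply: hrho.2.1.
Qed.

Lemma ore_ext_counit : rcounital tL rhoT eps.
Proof.
move=> x; apply: (left_fractions_ext Hi (@mulrA _) (@mul1r _) (@mulr1 _)
  (g := fun x => tens_counit tL (rhoT x)) (h := id)) => //.
- by move=> a b; rewrite rhoT_morph.2.1 (tens_counitM hL).
- by rewrite rhoT_morph.2.2 (tens_counit1 hL).
by move=> r; rewrite rhoT_iT /rho_loc (tens_counit_map hE hL Hi.1); congr iT; apply: hrho.2.2.
Qed.

Lemma rho_compatible_of_invertible : rho_compatible iT tE tL tL3 tBB Delta eps rho.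
Proof.
exists rhoT; split.
  split; last exact: rhoT_iT.
  by split; [exact: rhoT_morph | split; [exact: ore_ext_coassoc | exact: ore_ext_counit]].
move=> rhoT' [[rhoT'_morph _] rhoT'_iT]; apply: functional_extensionality.
apply: (left_fractions_ext Hi (@mulrA _) (@mul1r _) (@mulr1 _)
  rhoT_morph.2.1 rhoT'_morph.2.1 rhoT_morph.2.2 rhoT'_morph.2.2).
by move=> r; rewrite rhoT_iT rhoT'_iT.
Qed.

End Extension.

Lemma rho_compatibleP : rho_compatible iT tE tL tL3 tBB Delta eps rho <->
  forall t, T t -> invertible (rho_loc t).
Proof.
by split; [exact: rho_compatible_invertible | exact: rho_compatible_of_invertible].
Qed.

End Localization.

End BialgebraTensors.

Theorem mainTheorem1 (k : fieldType)
  (B BB : algType k) (BBB : lmodType k)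
  (tBB : B -> B -> BB) (tBBB : B -> B -> B -> BBB)
  (Delta : B -> BB) (eps : B -> k)
  (E EB : algType k) (EBB : lmodType k)
  (tE : E -> B -> EB) (tE3 : E -> B -> B -> EBB) (rho : E -> EB)
  (T : pred E)
  (L LB : algType k) (LBB : lmodType k)
  (tL : L -> B -> LB) (tL3 : L -> B -> B -> LBB) (iT : E -> L) :
  is_algtensor tBB -> is_tensor3 tBBB -> is_bialgebra tBB tBBB Delta eps ->
  is_algtensor tE -> is_tensor3 tE3 ->
  is_comodule_algebra tE tE3 tBB Delta eps rho ->
  left_ore_set T -> is_left_fractions T iT ->
  is_algtensor tL -> is_tensor3 tL3 ->
  (rho_compatible iT tE tL tL3 tBB Delta eps rho <->
   forall t, T t -> invertible (tlin tE (fun e b => tL (iT e) b) (rho t))).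
Proof.
move=> hBB _ [hDelta [heps [hepsM [heps1 _]]]] hE hE3 hrho HT Hi hL hL3.
exact: (rho_compatibleP hBB hDelta heps hepsM heps1 hE hE3 hrho HT Hi hL hL3).
Qed.
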